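(* Let $\{a,b\}$ be a $2$-element generating set of a finite abelian group $G$, and assume $\mathrm{Cay}(G;a,b)$ has hamiltonian paths $P$ and $P'$ satisfying either of the following two (equivalent) conditions: (1) $|\delta_b(P)-\delta_a(P')|\le 1$; or (2) $\delta_b(P)+\delta_b(P')\in\{|G|,|G|-1,|G|-2\}$. Then $\mathrm{Cay}(G;a,b)$ has two arc-disjoint hamiltonian paths.
   Context: The Cayley digraph $\mathrm{Cay}(G;a,b)$ has vertex set $G$ and an arc from $v$ to $v+s$ for all $v\in G$, $s\in\{a,b\}$; an arc $(v,v+s)$ is called an $s$-edge. For a subdigraph $P$ and $s\in\{a,b\}$, $\delta_s(P)$ denotes the number of $s$-edges in $P$. A hamiltonian path is a directed path visiting every vertex exactly once; arc-disjoint means sharing no arc. *)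

From mathcomp Require Import all_boot all_fingroup.
Set Implicit Arguments. Unset Strict Implicit. Unset Printing Implicit Defensive.
Local Open Scope group_scope.

Section Cayley.
Variable gT : finGroupType.

Definition cay_arc (a b : gT) : rel gT := fun u v => (v == u * a) || (v == u * b).

Definition arcs (p : seq gT) : seq (gT * gT) := zip p (behead p).

Definition ham_path (a b : gT) (p : seq gT) : bool :=
  [&& uniq p, size p == #|gT| & all (fun e => cay_arc a b e.1 e.2) (arcs p)].

Definition delta (s : gT) (p : seq gT) : nat :=
  count (fun e => e.2 == e.1 * s) (arcs p).

Definition arc_disjoint (p q : seq gT) : bool :=
  all (fun e => e \notin arcs q) (arcs p).
End Cayley.

From mathcomp Require Import all_boot all_fingroup cyclic zify.
Set Implicit Arguments. Unset Strict Implicit. Unset Printing Implicit Defensive.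
Local Open Scope group_scope.

(* Let h = a b^-1, H = <h>, m = #[h], and let k be the order of a modulo H.
   As b = a modulo H, a hamiltonian path visits the cosets of H cyclically,
   so its positions modulo k ("layers") are the k cosets, of m vertices each.
   Since x a = (x h) b, the non-terminal vertices x and x h cannot take a and
   b respectively; hence each layer but the last takes a single generator,
   and in the last layer the vertices w h^t (w terminal, 0 < t < m) take b
   exactly for t <= p.  Thus delta_b(P) = m beta + p, beta being the number
   of b-layers.  Translating P' and multiplying each layer by a power of h
   realises any layer pattern with beta(P') b-layers.  The hypothesis forces
   beta(P) + beta(P') to be k, k - 1 or k - 2, and in each case P' can be so
   realigned that at every vertex non-terminal in both paths it takes the
   generator P does not take, which makes the paths arc-disjoint. *)

Lemma count_iota_antitone (f : nat -> bool) s l :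
  (forall t, s <= t -> t.+1 < s + l -> f t.+1 -> f t) ->
  forall t, s <= t < s + l -> f t = (t < s + count f (iota s l)).
Proof.
elim: l s => [|l IH] s f_dec t /andP[st tl]; first lia.
have f_s d : s + d < s + l.+1 -> f (s + d) -> f s.
  elim: d => [|d IHd]; rewrite ?addn0 // => dl fd.
  apply: IHd; first lia.
  by apply: f_dec; [lia | lia | rewrite -addnS].
rewrite /=; case fs: (f s).
  case: (ltnP s t) => [s_lt_t | t_le_s]; last first.
    have -> : t = s by lia.
    by rewrite fs add1n addnS ltnS leq_addr.
  rewrite add1n addnS -addSn (IH s.+1) //; first by move=> u su ul; apply: f_dec; lia.
  lia.
have f_t u : s <= u < s + l.+1 -> f u = false.
  move=> /andP[su ul]; apply/negbTE/negP; rewrite -(subnKC su) => fu.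
  by rewrite (f_s (u - s)) in fs; lia.
rewrite f_t ?st // (eq_in_count (a2 := pred0)) ?count_pred0 ?addn0; first lia.
by move=> u; rewrite mem_iota => /andP[su ul]; apply: f_t; lia.
Qed.

Lemma card_count_uniq (T : finType) (s : seq T) (q : pred T) :
  uniq s -> #|[pred x | (x \in s) && q x]| = count q s.
Proof.
move=> us; rewrite -size_filter -(card_uniqP (filter_uniq q us)).
by apply: eq_card => x; rewrite !inE mem_filter andbC.
Qed.

Lemma sum_ord_predr (K : nat) (F : nat -> nat) :
  0 < K -> \sum_(i < K) F i = (\sum_(i < K.-1) F i + F K.-1)%N.
Proof. by case: K => // K _; rewrite big_ord_recr. Qed.

Lemma sum_negb (K : nat) (f : nat -> bool) :
  (\sum_(i < K) ~~ f i + \sum_(i < K) f i)%N = K.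
Proof.
rewrite -big_split /= -[RHS]card_ord -sum1_card.
by apply: eq_bigr => i _; case: (f i).
Qed.

Lemma sum_ord_rot (K o : nat) (F : nat -> nat) :
  \sum_(i < K) F ((i + o) %% K) = \sum_(i < K) F i.
Proof.
case: K => [|K]; first by rewrite !big_ord0.
have rot_lt (i : 'I_K.+1) : (i + o) %% K.+1 < K.+1 by rewrite ltn_pmod.
rewrite [RHS](reindex_inj (h := fun i : 'I_K.+1 => Ordinal (rot_lt i))) //=.
move=> i j /(congr1 val) /= /eqP; rewrite eqn_modDr !modn_small // => /eqP.
exact: val_inj.
Qed.

Lemma last_layer_shift m p p' : 1 < m -> p <= m.-1 -> p' <= m.-1 -> m.-2 <= p + p' <= m ->
  exists2 r, r < m &
    forall s, 0 < s < m -> (r + s) %% m != 0 -> ((r + s) %% m <= p) != (s <= p').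
Proof.
move=> m_gt1 pm p'm pp'; set r := if p + p' == m.-2 then p.+1 else p.
have r_def : r = p.+1 /\ p + p' = m.-2 \/ r = p /\ m.-1 <= p + p' by rewrite /r; case: eqP; lia.
exists r => [|s sm]; first lia.
have [rsm | mrs] := ltnP (r + s) m; first by rewrite modn_small //; lia.
rewrite -(subnK mrs) modnDr modn_small; lia.
Qed.

Section HamiltonianPaths.
Variable gT : finGroupType.
Variables a b : gT.
Local Notation n := #|gT|.
Local Notation "P `_ j" := (nth 1 P j) : group_scope.

Lemma card_gT_gt0 : 0 < n.
Proof. by apply/card_gt0P; exists 1. Qed.

Lemma arcs_nth (s : seq gT) : arcs s = [seq (s`_j, s`_j.+1) | j <- iota 0 (size s).-1].
Proof.
elim: s => [|x [|y s] IH] //; rewrite /arcs /= in IH *.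
by rewrite IH -[in iota 1 _](addn0 1%N) iotaDl -map_comp.
Qed.

Definition terminal (P : seq gT) := P`_(size P).-1.
Definition succ_vtx (P : seq gT) x := P`_(index x P).+1.
Definition takes_b (P : seq gT) x := succ_vtx P x == x * b.

Lemma ham_pathP (P : seq gT) :
  reflect [/\ uniq P, size P = n & forall j, j.+1 < n -> cay_arc a b P`_j P`_j.+1]
          (ham_path a b P).
Proof.
apply: (iffP and3P) => [[uP /eqP sP arcsP] | [uP sP arcsP]]; split=> //.
  move=> j jn; move/allP: arcsP => /(_ (P`_j, P`_j.+1)); apply.
  by rewrite arcs_nth sP; apply/mapP; exists j; rewrite // mem_iota; lia.
- by rewrite sP.
apply/allP=> e; rewrite arcs_nth sP => /mapP[j]; rewrite mem_iota add0n => jn ->.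
by apply: arcsP; have := card_gT_gt0; lia.
Qed.

Section HamPath.
Variable P : seq gT.
Hypothesis hP : ham_path a b P.

Lemma ham_uniq : uniq P. Proof. by case/ham_pathP: hP. Qed.
Lemma ham_size : size P = n. Proof. by case/ham_pathP: hP. Qed.

Lemma ham_mem x : x \in P.
Proof.
have /subset_cardP : #|P| = n by rewrite (card_uniqP ham_uniq) ham_size.
by move/(_ (subset_predT _)) ->.
Qed.

Lemma index_ham_lt x : index x P < n.
Proof. by rewrite -ham_size index_mem ham_mem. Qed.

Lemma nth_index_ham x : P`_(index x P) = x.
Proof. exact: nth_index (ham_mem x). Qed.

Lemma index_nth_ham j : j < n -> index P`_j P = j.
Proof. by move=> jn; rewrite index_uniq ?ham_size ?ham_uniq. Qed.

Lemma terminalE : terminal P = P`_n.-1.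
Proof. by rewrite /terminal ham_size. Qed.

Lemma neq_terminal x : (x != terminal P) = (index x P < n.-1).
Proof.
rewrite /terminal -{1}(nth_index_ham x) nth_uniq ?ham_size ?ham_uniq ?index_ham_lt //.
  by rewrite ltn_neqAle -ltnS prednK ?card_gT_gt0 ?index_ham_lt ?andbT.
by rewrite prednK ?card_gT_gt0.
Qed.

Lemma succ_vtxE x : x != terminal P -> succ_vtx P x = x * (if takes_b P x then b else a).
Proof.
rewrite neq_terminal ltn_predRL /takes_b /succ_vtx => xn.
have [_ _ /(_ _ xn)] := ham_pathP _ hP; rewrite nth_index_ham /cay_arc.
by case/orP=> /eqP->; [case: eqP | rewrite eqxx].
Qed.

Lemma succ_vtx_inj x y :
  x != terminal P -> y != terminal P -> succ_vtx P x = succ_vtx P y -> x = y.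
Proof.
rewrite !neq_terminal /succ_vtx => xn yn /eqP.
rewrite nth_uniq ?ham_size ?ham_uniq -?ltn_predRL // eqSS.
by move/eqP/(congr1 (nth 1 P)); rewrite !nth_index_ham.
Qed.

Lemma card_ham_count (q : pred gT) : #|[pred x | q x]| = count q P.
Proof.
rewrite -(card_count_uniq q ham_uniq); apply: eq_card => x.
by rewrite !inE ham_mem.
Qed.

Lemma arcs_ham e : e \in arcs P -> e.1 != terminal P /\ e.2 = succ_vtx P e.1.
Proof.
rewrite arcs_nth ham_size => /mapP[j]; rewrite mem_iota add0n => jn -> /=.
by rewrite neq_terminal /succ_vtx index_nth_ham // (leq_trans jn) ?leq_pred.
Qed.

Lemma delta_nth s : delta s P = count (fun j => P`_j.+1 == P`_j * s) (iota 0 n.-1).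
Proof. by rewrite /delta arcs_nth ham_size count_map. Qed.

Lemma delta_b_card : delta b P = #|[pred x | (x != terminal P) && takes_b P x]|.
Proof.
rewrite card_ham_count delta_nth [X in _ = count _ X](_ : P = mkseq (nth 1 P) n); last first.
  by rewrite -ham_size mkseq_nth.
rewrite /mkseq count_map.
rewrite -{2}(prednK card_gT_gt0) -addn1 iotaD count_cat /= add0n -terminalE eqxx /= !addn0.
apply: eq_in_count => j; rewrite mem_iota /= add0n ltn_predRL => jn.
by rewrite neq_terminal /takes_b /succ_vtx !index_nth_ham ?(ltnW jn) // ltn_predRL jn.
Qed.

Lemma delta_a_add_b : a != b -> (delta a P + delta b P)%N = n.-1.
Proof.
move=> a_neq_b.
rewrite !delta_nth addnC -[RHS](size_iota 0) -(count_predC (fun j => P`_j.+1 == P`_j * b)).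
congr (_ + _)%N; apply: eq_in_count => j /=; rewrite mem_iota add0n ltn_predRL => jn.
have [_ _ /(_ j jn)] := ham_pathP _ hP; rewrite /cay_arc => /orP[].
  by move/eqP->; rewrite !(inj_eq (mulgI _)) eqxx (negbTE a_neq_b).
by move/eqP->; rewrite !(inj_eq (mulgI _)) eqxx eq_sym (negbTE a_neq_b).
Qed.

End HamPath.

Lemma arc_disjoint_takes_b P Q : ham_path a b P -> ham_path a b Q ->
  (forall x, x != terminal P -> x != terminal Q -> takes_b P x != takes_b Q x) ->
  arc_disjoint P Q.
Proof.
move=> hP hQ differ; apply/allP=> e /(arcs_ham hP)[eP e2P].
apply/negP=> /(arcs_ham hQ)[eQ e2Q].
by move: (differ _ eP eQ); rewrite /takes_b -e2P -e2Q eqxx.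
Qed.

End HamiltonianPaths.

Arguments ham_pathP {gT a b P}.

Section Cayley.
Variable gT : finGroupType.
Variables a b : gT.
Hypothesis abelG : abelian [set: gT].
Hypothesis a_neq_b : a != b.

Lemma mulgC (x y : gT) : x * y = y * x.
Proof. exact: (centsP abelG). Qed.

Definition h := a * b^-1.
Local Notation m := #[h].
Local Notation H := <[h]>.
Local Notation n := #|gT|.
Local Notation "P `_ j" := (nth 1 P j) : group_scope.

Local Notation takes_b := (takes_b b).

Lemma mul_b_h : b * h = a.
Proof. by rewrite /h mulgC mulgKV. Qed.

Lemma h_neq1 : h != 1.
Proof. by apply: contra a_neq_b => /eqP h1; rewrite -mul_b_h h1 mulg1. Qed.

Lemma order_h_gt1 : 1 < m.
Proof. by rewrite ltn_neqAle order_gt0 andbT eq_sym order_eq1 h_neq1. Qed.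

Lemma invg_expg_h t : (h ^+ t)^-1 = h ^+ (m.-1 * t).
Proof.
apply: (@mulgI _ (h ^+ t)); rewrite mulgV -expgD -mulSn prednK ?order_gt0 //.
by rewrite expgM expg_order expg1n.
Qed.

Lemma b_eq : b = a * h ^+ m.-1.
Proof. by rewrite -(muln1 m.-1) -invg_expg_h expg1 -mul_b_h mulgK. Qed.

Lemma norm_H x : x \in 'N(H).
Proof. exact: subsetP (sub_abelian_norm abelG (subsetT _)) x (in_setT x). Qed.

(* G / H is cyclic, generated by the coset of a, which is also that of b. *)
Definition k := #[coset H a].

Lemma k_gt0 : 0 < k. Proof. exact: order_gt0. Qed.

Definition a_steps (x y : gT) (i : nat) := coset H (x^-1 * y) = coset H a ^+ i.

Lemma a_steps_refl x : a_steps x x 0.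
Proof. by rewrite /a_steps mulVg morph1. Qed.

Lemma a_steps_trans x y z i j : a_steps x y i -> a_steps y z j -> a_steps x z (i + j).
Proof.
rewrite /a_steps expgD => <- <-.
by rewrite -morphM ?norm_H // mulgA mulgK.
Qed.

Lemma a_steps_mulh x t : a_steps x (x * h ^+ t) 0.
Proof. by rewrite /a_steps mulKg coset_id ?mem_cycle ?groupX ?cycle_id. Qed.

Lemma a_steps_mula x : a_steps x (x * a) 1.
Proof. by rewrite /a_steps mulKg expg1. Qed.

Lemma a_steps_mulb x : a_steps x (x * b) 1.
Proof.
rewrite b_eq mulgA; have := a_steps_trans (a_steps_mula x) (a_steps_mulh (x * a) m.-1).
by rewrite addn0.
Qed.

Lemma a_steps_mull g x y i : a_steps x y i -> a_steps (g * x) (g * y) i.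
Proof. by rewrite /a_steps invMg mulgA mulgKV. Qed.

Lemma a_steps_mod x y i : a_steps x y i -> forall j, a_steps x y j <-> i = j %[mod k].
Proof.
rewrite /a_steps => -> j; split=> [/eqP | e]; first by rewrite eq_expg_mod_order => /eqP.
by apply/eqP; rewrite eq_expg_mod_order e.
Qed.

Lemma a_steps_same v x y i : a_steps v x i -> a_steps v y i -> a_steps x y 0.
Proof.
rewrite /a_steps expg0 => vx vy.
have -> : x^-1 * y = (v^-1 * x)^-1 * (v^-1 * y) by rewrite invMg invgK mulgA mulgK.
by rewrite morphM ?morphV ?norm_H ?groupV ?norm_H //= vx vy mulVg.
Qed.

Lemma a_steps0_mulh x y : a_steps x y 0 -> exists2 t, t < m & y = x * h ^+ t.
Proof.
rewrite /a_steps => /(coset_idr (norm_H _)) /cycleP [t et].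
by exists (t %% m); rewrite ?ltn_pmod ?order_gt0 // expg_mod_order -et mulKVg.
Qed.

Lemma a_steps_lcoset v x i : a_steps v x i <-> x \in (v * a ^+ i) *: H.
Proof.
rewrite /a_steps mem_lcoset invMg -mulgA.
have cosetE : coset H ((a ^+ i)^-1 * (v^-1 * x)) = (coset H a ^+ i)^-1 * coset H (v^-1 * x).
  by rewrite morphM ?morphV ?morphX ?norm_H ?groupV ?norm_H.
split=> [e | /coset_id].
  by apply: (coset_idr (norm_H _)); rewrite cosetE e mulVg.
by rewrite cosetE => /(canRL (mulKg _)); rewrite mulg1 invgK.
Qed.

Section Layers.
Variable P : seq gT.
Hypothesis hP : ham_path a b P.

(* x h b = x a, and distinct non-terminal vertices have distinct successors *)
Lemma takes_a_mulh x :
  x != terminal P -> x * h != terminal P -> ~~ takes_b P x -> ~~ takes_b P (x * h).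
Proof.
move=> xn xhn xa; apply/negP => xhb.
have := succ_vtxE hP xn; have := succ_vtxE hP xhn; rewrite (negbTE xa) xhb.
rewrite -mulgA (mulgC h) mul_b_h => xh_a x_a.
have := succ_vtx_inj hP xhn xn (etrans xh_a (esym x_a)).
by rewrite -{2}[x]mulg1 => /mulgI/eqP; apply/negP/h_neq1.
Qed.

Definition layer x := index x P %% k.

Lemma a_steps_nth j : j < n -> a_steps P`_0 P`_j j.
Proof.
elim: j => [|j IH] jn; first exact: a_steps_refl.
have [_ _ /(_ j jn)] := ham_pathP hP; rewrite -addn1 /cay_arc.
by case/orP=> /eqP->; apply: a_steps_trans (IH (ltnW jn)) _;
  [apply: a_steps_mula | apply: a_steps_mulb].
Qed.

Lemma layerP x i : a_steps P`_0 x i <-> layer x = i %% k.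
Proof.
have modP := a_steps_mod (a_steps_nth (index_ham_lt hP x)); rewrite (nth_index_ham hP) in modP.
by split=> [/modP | /modP].
Qed.

Lemma a_steps_layer x : a_steps P`_0 x (layer x).
Proof. by apply/layerP; rewrite modn_mod. Qed.

Lemma layer_lt x : layer x < k.
Proof. by rewrite ltn_pmod ?k_gt0. Qed.

Lemma layer_a_steps x y i : a_steps x y i -> layer y = (layer x + i) %% k.
Proof. by move=> xy; apply/layerP/(a_steps_trans (a_steps_layer x)). Qed.

Lemma layer_mula x : layer (x * a) = (layer x).+1 %% k.
Proof. by rewrite (layer_a_steps (a_steps_mula x)) addn1. Qed.

Lemma layer_mulb x : layer (x * b) = (layer x).+1 %% k.
Proof. by rewrite (layer_a_steps (a_steps_mulb x)) addn1. Qed.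

Lemma layer_mulh x t : layer (x * h ^+ t) = layer x.
Proof. by rewrite (layer_a_steps (a_steps_mulh x t)) addn0 modn_small ?layer_lt. Qed.

Lemma layer_nth j : j < n -> layer P`_j = j %% k.
Proof. by move=> jn; rewrite /layer (index_nth_ham hP). Qed.

Lemma same_layer x y : layer x = layer y -> exists2 t, t < m & y = x * h ^+ t.
Proof.
move=> xy; apply: a_steps0_mulh; apply: (a_steps_same (a_steps_layer x)).
by rewrite xy; apply: a_steps_layer.
Qed.

Lemma card_layer_split (q : pred gT) :
  #|[pred x | q x]| = \sum_(i < k) #|[pred x | (layer x == i) && q x]|.
Proof.
rewrite -sum1_card (partition_big (fun x => Ordinal (layer_lt x)) xpredT) //=.
apply: eq_bigr => i _; rewrite -sum1_card; apply: eq_bigl => x.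
by rewrite !inE -val_eqE andbC.
Qed.

Lemma card_layer i : i < k -> #|[pred x | layer x == i]| = m.
Proof.
move=> ik; rewrite -[m](card_lcoset _ (P`_0 * a ^+ i)); apply: eq_card => x.
by rewrite inE; apply/eqP/idP => [xi | /a_steps_lcoset/layerP->];
  [apply/a_steps_lcoset/layerP; rewrite modn_small | rewrite modn_small].
Qed.

Lemma card_gT_eq : n = (k * m)%N.
Proof.
rewrite (@eq_card _ _ [pred x | predT x]) // (card_layer_split predT).
rewrite (eq_bigr (fun=> m)) ?sum_nat_const ?card_ord //.
by move=> i _; rewrite -(card_layer (ltn_ord i)); apply: eq_card => x; rewrite !inE andbT.
Qed.

Lemma k_le_n : k <= n.
Proof. by rewrite card_gT_eq leq_pmulr ?order_gt0. Qed.

Lemma layer_terminal : layer (terminal P) = k.-1.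
Proof.
have k_gt0 := k_gt0; have m_gt1 := order_h_gt1.
rewrite /terminal (ham_size hP) layer_nth ?prednK ?(card_gT_gt0 gT) // card_gT_eq.
have -> : (k * m).-1 = (m.-1 * k + k.-1)%N by nia.
by rewrite modnMDl modn_small // prednK.
Qed.

Lemma neq_terminal_layer x : layer x != k.-1 -> x != terminal P.
Proof. by apply: contra => /eqP->; rewrite layer_terminal. Qed.

Lemma takes_a_mulhX z t : layer z != k.-1 -> ~~ takes_b P z -> ~~ takes_b P (z * h ^+ t).
Proof.
move=> zl za; elim: t => [|t IH]; first by rewrite mulg1.
rewrite expgSr mulgA; apply: takes_a_mulh => //; apply: neq_terminal_layer.
  by rewrite layer_mulh.
by rewrite -mulgA -expgSr layer_mulh.
Qed.

Lemma takes_b_mulhX z t : layer z != k.-1 -> takes_b P (z * h ^+ t) = takes_b P z.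
Proof.
move=> zl; case zb: (takes_b P z); last exact/negbTE/takes_a_mulhX/negbT.
apply/negPn/negP => zt_a.
have := takes_a_mulhX (m.-1 * t) _ zt_a; rewrite layer_mulh => /(_ zl).
by rewrite -mulgA -invg_expg_h mulgV mulg1 zb.
Qed.

Definition layer_step i := takes_b P P`_i.

Lemma takes_b_layer x : layer x < k.-1 -> takes_b P x = layer_step (layer x).
Proof.
move=> xl; have xn : layer x < n by apply: leq_trans (layer_lt x) k_le_n.
have [t _ xE] : exists2 t, t < m & x = P`_(layer x) * h ^+ t.
  by apply: same_layer; rewrite layer_nth // modn_small ?layer_lt.
by rewrite {1}xE takes_b_mulhX // layer_nth // modn_small ?layer_lt // neq_ltn xl.
Qed.

Lemma terminal_mulh_neq t : 0 < t < m -> terminal P * h ^+ t != terminal P.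
Proof.
case/andP=> t0 tm; rewrite -{2}[terminal P]mulg1 (inj_eq (mulgI _)) -order_dvdn.
by apply/negP => /(dvdn_leq t0); rewrite leqNgt tm.
Qed.

Definition last_b := count (fun t => takes_b P (terminal P * h ^+ t)) (iota 1 m.-1).

Lemma takes_b_last t : 0 < t < m -> takes_b P (terminal P * h ^+ t) = (t <= last_b).
Proof.
have m_gt1 := order_h_gt1; move=> tm.
have -> : (t <= last_b) = (t < 1 + last_b) by rewrite add1n ltnS.
apply: (count_iota_antitone (f := fun t => takes_b P (terminal P * h ^+ t))).
  move=> u u1 um; apply: contraTT; rewrite expgSr mulgA.
  by apply: takes_a_mulh; rewrite -?mulgA -?expgSr terminal_mulh_neq //; lia.
by rewrite add1n prednK //; lia.
Qed.

Lemma last_layerP x :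
  layer x = k.-1 -> x != terminal P -> exists2 s, 0 < s < m & x = terminal P * h ^+ s.
Proof.
rewrite -layer_terminal => /esym/same_layer[s sm xE] xn.
by exists s; rewrite // sm andbT lt0n; apply: contraNneq xn => s0; rewrite xE s0 mulg1.
Qed.

Definition b_layers := \sum_(i < k.-1) layer_step i.

Lemma b_layers_le : b_layers <= k.-1.
Proof.
rewrite -[X in _ <= X]card_ord -sum1_card.
by apply: leq_sum => i _; case: layer_step.
Qed.

Lemma last_b_le : last_b <= m.-1.
Proof. by rewrite /last_b (leq_trans (count_size _ _)) ?size_iota. Qed.

Lemma card_last_layer_b :
  #|[pred x | (layer x == k.-1) && ((x != terminal P) && takes_b P x)]| = last_b.
Proof.
set ts := [seq terminal P * h ^+ t | t <- iota 1 m.-1].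
have ts_uniq : uniq ts.
  rewrite map_inj_in_uniq ?iota_uniq // => t u; rewrite !mem_iota => tm um /mulgI/eqP.
  by rewrite eq_expg_mod_order !modn_small => [/eqP||]; lia.
have -> : last_b = count (takes_b P) ts by rewrite count_map.
rewrite -card_count_uniq //; apply: eq_card => x; rewrite !inE andbA; congr (_ && _).
apply/andP/mapP => [[/eqP xl xn] | [t]].
  by have [s sm ->] := last_layerP xl xn; exists s; rewrite // mem_iota; lia.
rewrite mem_iota => tm ->; rewrite layer_mulh layer_terminal eqxx terminal_mulh_neq //; lia.
Qed.

Lemma delta_bE : delta b P = (m * b_layers + last_b)%N.
Proof.
pose q x := (x != terminal P) && takes_b P x.
rewrite (delta_b_card hP) (card_layer_split q).
rewrite (sum_ord_predr (fun i => #|[pred x | (layer x == i) && q x]|) k_gt0) card_last_layer_b.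
congr (_ + _)%N; rewrite /b_layers big_distrr /=; apply: eq_bigr => i _.
have il : i < k.-1 := ltn_ord i.
case si: (layer_step i); rewrite ?muln1 ?muln0.
  rewrite -(card_layer (i := i)); last by apply: leq_trans il (leq_pred _).
  apply: eq_card => x; rewrite !inE /q; case: eqP => //= xi.
  by rewrite neq_terminal_layer ?takes_b_layer xi ?si // neq_ltn il.
apply: eq_card0 => x; rewrite !inE /q; apply/negP => /and3P[/eqP xi _].
by rewrite takes_b_layer xi ?si.
Qed.

End Layers.

Local Notation step c := (if c then b else a).

Lemma step_mulh (s u : bool) : step s * h ^+ (s + m - u) = step u.
Proof.
have m_gt1 := order_h_gt1.
case: s; case: u => /=; rewrite ?add1n ?add0n ?subn0 ?subn1 ?expg_order ?mulg1 //.
  by rewrite expgS mulgA mul_b_h expg_order mulg1.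
by rewrite -b_eq.
Qed.

Lemma cay_arc_step x (c : bool) : cay_arc a b x (x * step c).
Proof. by rewrite /cay_arc; case: c; rewrite eqxx ?orbT. Qed.

Lemma eq_step_b (c : bool) : (step c == b) = c.
Proof. by case: c; rewrite ?eqxx // (negbTE a_neq_b). Qed.

Section Realign.
Variable P : seq gT.
Hypothesis hP : ham_path a b P.
Variable pat : nat -> bool.
Variable g : gT.
Hypothesis pat_count : \sum_(i < k.-1) pat i = b_layers P.

(* Since a = b h, an s-step followed by h^(s - u) is a u-step; [offset]
   accumulates these corrections layer by layer.  They add up to a multiple
   of m when [pat] has as many b-layers as P, so the last layer is only
   translated by g. *)
Definition offset i := \sum_(l < i) (layer_step P l + m - pat l).
Definition realign x := g * x * h ^+ offset (layer P x).

Lemma offset_last : h ^+ offset k.-1 = 1.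
Proof.
have : (offset k.-1 + \sum_(i < k.-1) pat i)%N = (b_layers P + k.-1 * m)%N.
  rewrite /offset -big_split /= (eq_bigr (fun l : 'I_k.-1 => layer_step P l + m)%N).
    by rewrite big_split sum_nat_const card_ord.
  by move=> l _; have := order_h_gt1; case: (pat l); case: layer_step => /=; lia.
rewrite pat_count addnC => /addnI->.
by rewrite mulnC expgM expg_order expg1n.
Qed.

Lemma realign_inj : injective realign.
Proof.
move=> x y; rewrite /realign -!mulgA => /mulgI eq_xy.
have yE : y = x * h ^+ (offset (layer P x) + m.-1 * offset (layer P y)).
  by rewrite expgD -invg_expg_h mulgA eq_xy mulgK.
by move: eq_xy; rewrite yE (layer_mulh hP) => /mulIg.
Qed.

Lemma realign_succ x : x != terminal P ->
  realign (succ_vtx P x) =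
    realign x * step (if layer P x < k.-1 then pat (layer P x) else takes_b P x).
Proof.
move=> xn; rewrite (succ_vtxE hP xn) /realign.
have -> : layer P (x * step (takes_b P x)) = (layer P x).+1 %% k.
  by case: takes_b; rewrite ?(layer_mula hP) ?(layer_mulb hP).
have k_gt0 := k_gt0; have xk := layer_lt P x.
case: (ltnP (layer P x) k.-1) => xl.
  rewrite modn_small; last lia.
  rewrite (takes_b_layer hP) // /offset big_ord_recr /= -/(offset _) expgD.
  rewrite -(step_mulh (layer_step P (layer P x)) (pat (layer P x))) !mulgA.
  by congr (_ * _); rewrite -!mulgA (mulgC (step _)).
have -> : (layer P x).+1 = k by lia.
have -> : layer P x = k.-1 by lia.
by rewrite modnn /offset big_ord0 offset_last !mulg1 mulgA.
Qed.

Definition realigned := map realign P.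

Lemma nth_realigned j : j < n -> realigned`_j = realign P`_j.
Proof. by move=> jn; rewrite (nth_map 1) ?(ham_size hP). Qed.

Lemma realigned_ham : ham_path a b realigned.
Proof.
apply/ham_pathP; split.
- by rewrite map_inj_uniq ?(ham_uniq hP) //; apply: realign_inj.
- by rewrite size_map (ham_size hP).
move=> j jn; have jn' : j < n by apply: ltnW.
have Pj_n : P`_j != terminal P by rewrite (neq_terminal hP) (index_nth_ham hP) // ltn_predRL.
have Pj_succ : P`_j.+1 = succ_vtx P P`_j by rewrite /succ_vtx (index_nth_ham hP).
by rewrite !nth_realigned // Pj_succ realign_succ //; apply: cay_arc_step.
Qed.

Lemma realigned_terminal : terminal realigned = realign (terminal P).
Proof.
by rewrite (terminalE realigned_ham) nth_realigned ?prednK ?(card_gT_gt0 gT) // -(terminalE hP).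
Qed.

Lemma takes_b_realigned x : x != terminal P ->
  takes_b realigned (realign x) =
    if layer P x < k.-1 then pat (layer P x) else takes_b P x.
Proof.
move=> xn; rewrite /takes_b /succ_vtx index_map; last exact: realign_inj.
rewrite nth_realigned; last by move: xn; rewrite (neq_terminal hP) ltn_predRL.
by rewrite -/(succ_vtx P x) realign_succ // (inj_eq (mulgI _)) eq_step_b.
Qed.

Lemma layer_realign Q : ham_path a b Q ->
  forall x, layer Q (realign x) = (layer Q (g * P`_0) + layer P x) %% k.
Proof.
move=> hQ x; rewrite /realign (layer_mulh hQ); apply: (layer_a_steps hQ).
exact/a_steps_mull/a_steps_layer.
Qed.

End Realign.

Definition disjoint_ham_pair :=
  exists Q Q' : seq gT, [/\ ham_path a b Q, ham_path a b Q' & arc_disjoint Q Q'].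

Lemma disjoint_pair_realign P P' (pat : nat -> bool) g :
  ham_path a b P -> ham_path a b P' -> \sum_(i < k.-1) pat i = b_layers P' ->
  (forall x, x != terminal P' -> realign P' pat g x != terminal P ->
     takes_b P (realign P' pat g x)
       != if layer P' x < k.-1 then pat (layer P' x) else takes_b P' x) ->
  disjoint_ham_pair.
Proof.
move=> hP hP' pat_count differ; have hQ := realigned_ham hP' g pat_count.
exists P, (realigned P' pat g); split=> //.
apply: (arc_disjoint_takes_b hP hQ) => u; have /mapP[x _ ->] := ham_mem hQ u.
move=> x_n; rewrite (realigned_terminal hP' g pat_count) => x_n'.
have xn : x != terminal P' by apply: contraNneq x_n' => ->.
by rewrite (takes_b_realigned hP' g pat_count xn); apply: differ.
Qed.

Lemma takes_b_last_const P (c : bool) : ham_path a b P ->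
  last_b P = (if c then m.-1 else 0) ->
  forall x, layer P x = k.-1 -> x != terminal P -> takes_b P x = c.
Proof.
move=> hP last_c x xl xn; have [s sm ->] := last_layerP hP xl xn.
by rewrite (takes_b_last hP) // last_c; case: (c); apply/idP/idP; lia.
Qed.

Lemma exists_layer_step P (c : bool) :
  b_layers P != (c * k.-1)%N -> exists2 j, j < k.-1 & layer_step P j = ~~ c.
Proof.
case: (pickP (fun j : 'I_k.-1 => layer_step P j == ~~ c)) => [j /eqP | const].
  by exists j.
rewrite /b_layers (eq_bigr (fun=> nat_of_bool c)) => [|i _].
  by rewrite sum_nat_const card_ord mulnC eqxx.
by move: (const i); case: layer_step; case: (c).
Qed.

(* Layer i of the realigned P' lands on layer i + j0 + 1 of P and takes the
   other generator; its last layer lands on layer j0, which P crosses with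
   the generator ~~ c opposite to that of the last layers. *)
Lemma disjoint_pair_uniform_last P P' (c : bool) :
  ham_path a b P -> ham_path a b P' ->
  last_b P = (if c then m.-1 else 0) -> last_b P' = (if c then m.-1 else 0) ->
  (b_layers P + b_layers P' + 2 * c)%N = k -> disjoint_ham_pair.
Proof.
move=> hP hP' lastP lastP' sum_layers; have k_gt0 := k_gt0.
have [j0 j0k sj0] : exists2 j, j < k.-1 & layer_step P j = ~~ c.
  by apply: exists_layer_step; have := b_layers_le P'; case: (c) sum_layers => /=; lia.
pose shifted r := if r < k.-1 then layer_step P r else c.
pose pat i := ~~ shifted ((i + j0.+1) %% k).
pose g := P`_j0.+1 * (P'`_0)^-1.
have takes_bP y : y != terminal P -> takes_b P y = shifted (layer P y).
  move=> yn; rewrite /shifted; case: ltnP => yl; first exact: takes_b_layer.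
  by apply: (takes_b_last_const hP lastP) => //; have := layer_lt P y; lia.
have last_to_j0 : (k.-1 + j0.+1) %% k = j0.
  by rewrite addnS -addSn prednK // modnDl modn_small //; lia.
have pat_count : \sum_(i < k.-1) pat i = b_layers P'.
  have rot : \sum_(i < k) pat i = \sum_(r < k) ~~ shifted r.
    exact: sum_ord_rot k j0.+1 (fun r => nat_of_bool (~~ shifted r)).
  rewrite (sum_ord_predr (fun i => nat_of_bool (pat i)) k_gt0) in rot.
  rewrite (sum_ord_predr (fun r => nat_of_bool (~~ shifted r)) k_gt0) in rot.
  have pat_last : pat k.-1 = c by rewrite /pat last_to_j0 /shifted j0k sj0 negbK.
  have shifted_last : shifted k.-1 = c by rewrite /shifted ltnn.
  have shifted_low : \sum_(r < k.-1) ~~ shifted r = \sum_(r < k.-1) ~~ layer_step P r.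
    by apply: eq_bigr => r _; rewrite /shifted ltn_ord.
  rewrite pat_last shifted_last shifted_low in rot.
  have := sum_negb k.-1 (layer_step P); rewrite -/(b_layers P).
  lia.
apply: (disjoint_pair_realign (g := g) hP hP' pat_count) => x xn' rxn.
have g0 : layer P (g * P'`_0) = j0.+1.
  have j0k' : j0.+1 < k by lia.
  by rewrite mulgKV (layer_nth hP) ?modn_small // (leq_trans j0k' (k_le_n hP)).
rewrite (takes_bP _ rxn) (layer_realign hP' pat g hP) g0.
case: ltnP => xl; first by rewrite /pat [layer P' x + _]addnC; case: (shifted _).
have -> : layer P' x = k.-1 by have := layer_lt P' x; lia.
rewrite addnC last_to_j0 (takes_b_last_const hP' lastP') //; last first.
  by have := layer_lt P' x; lia.
by rewrite /shifted j0k sj0; case: (c).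
Qed.

(* Layers are matched identically with complemented steps; the last layers
   are matched up to the shift h^r of [last_layer_shift]. *)
Lemma disjoint_pair_complementary P P' :
  ham_path a b P -> ham_path a b P' ->
  (b_layers P + b_layers P')%N = k.-1 -> m.-2 <= last_b P + last_b P' <= m ->
  disjoint_ham_pair.
Proof.
move=> hP hP' sum_layers sum_last.
have [r rm shift] := last_layer_shift order_h_gt1 (last_b_le P) (last_b_le P') sum_last.
pose pat i := ~~ layer_step P i.
pose g := terminal P * h ^+ r * (terminal P')^-1.
have pat_count : \sum_(i < k.-1) pat i = b_layers P'.
  by have := sum_negb k.-1 (layer_step P); rewrite /pat -/(b_layers P); lia.
have layer_realign_same x : layer P (realign P' pat g x) = layer P' x.
  have o0 : layer P (g * P'`_0) = 0.
    have := layer_realign hP' pat g hP (terminal P').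
    rewrite /realign (layer_terminal hP') (offset_last hP' pat_count) mulg1 mulgKV.
    rewrite (layer_mulh hP) (layer_terminal hP).
    case: (layer P (g * P'`_0)) (layer_lt P (g * P'`_0)) => // o ok.
    rewrite addSn -addnS prednK ?k_gt0 // modnDr modn_small; lia.
  by rewrite (layer_realign hP' pat g hP) o0 add0n modn_small ?layer_lt.
apply: (disjoint_pair_realign (g := g) hP hP' pat_count) => x xn' rxn.
case: ltnP => xl.
  by rewrite (takes_b_layer hP) ?layer_realign_same // /pat; case: (layer_step _ _).
have xl' : layer P' x = k.-1 by have := layer_lt P' x; lia.
have [s sm xE] := last_layerP hP' xl' xn'.
have rxE : realign P' pat g x = terminal P * h ^+ ((r + s) %% m).
  rewrite /realign xl' (offset_last hP' pat_count) mulg1 {1}xE /g mulgA mulgKV.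
  by rewrite -mulgA -expgD expg_mod_order.
have rs0 : (r + s) %% m != 0.
  by apply: contraNneq rxn => rs0; rewrite rxE rs0 mulg1.
rewrite rxE xE !(takes_b_last hP, takes_b_last hP') //; first exact: shift.
by rewrite lt0n rs0 ltn_pmod ?order_gt0.
Qed.

Lemma disjoint_pair_of_delta P P' : ham_path a b P -> ham_path a b P' ->
  delta b P + delta b P' <= n <= (delta b P + delta b P').+2 -> disjoint_ham_pair.
Proof.
move=> hP hP'; rewrite !delta_bE // (card_gT_eq hP) => /andP[lo hi].
have := b_layers_le P; have := b_layers_le P'; have := last_b_le P; have := last_b_le P'.
have m_gt1 := order_h_gt1.
move: lo hi; set B := b_layers P; set B' := b_layers P'; set p := last_b P; set p' := last_b P'.
move=> lo hi p'm pm B'k Bk.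
have le_k : B + B' <= k by rewrite -(leq_pmul2l (ltnW m_gt1)); lia.
have k_le : k <= B + B' + 2 by rewrite -(leq_pmul2l (ltnW m_gt1)); lia.
have mk : (m * k = m * B + m * B' + m * (k - (B + B')))%N by rewrite -!mulnDr subnKC.
move dE : (k - (B + B'))%N mk => d mk.
have [d0 | [d1 | d2]] : (d = 0 \/ d = 1 \/ d = 2)%N by lia.
- rewrite d0 in mk; apply: (disjoint_pair_uniform_last (c := false) hP hP') => /=; lia.
- by rewrite d1 in mk; apply: (disjoint_pair_complementary hP hP'); lia.
- rewrite d2 in mk; apply: (disjoint_pair_uniform_last (c := true) hP hP') => /=; lia.
Qed.

End Cayley.

Theorem mainTheorem8 (gT : finGroupType) (a b : gT) :
  abelian [set: gT] ->
  a != b ->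
  <<[set a; b]>> = [set: gT] ->
  (exists P P' : seq gT,
     [/\ ham_path a b P, ham_path a b P' &
       (((delta b P <= (delta a P').+1) && (delta a P' <= (delta b P).+1))%N
        \/ (delta b P + delta b P' <= #|gT| <= (delta b P + delta b P').+2)%N)]) ->
  exists Q Q' : seq gT,
    [/\ ham_path a b Q, ham_path a b Q' & arc_disjoint Q Q'].
Proof.
(* The generation hypothesis follows from the existence of a hamiltonian path. *)
move=> abelG a_neq_b _ [P [P' [hP hP' hdelta]]].
apply: (disjoint_pair_of_delta abelG a_neq_b hP hP').
have := delta_a_add_b hP' a_neq_b; have := card_gT_gt0 gT.
by case: hdelta => /andP[]; lia.
Qed.
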